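(* Let $X$ be a strictly convex $C^{(3)}$ curve in the plane $\mathbb{R}^2$, and let $P\in X$. For sufficiently small $h>0$, let $T_P(h)$ and $U_P(h)$ be the areas of the triangles $\triangle AA_1A_2$ and $\triangle BB_1B_2$ associated with $P$ and $h$ as described in the context. Then $$\lim_{h\to 0^+}\frac{T_P(h)}{h\sqrt{h}}=\frac{\sqrt{2}}{\sqrt{\kappa(P)}}\qquad\text{and}\qquad \lim_{h\to 0^+}\frac{U_P(h)}{h\sqrt{h}}=\frac{\sqrt{2}}{2\sqrt{\kappa(P)}},$$ where $\kappa(P)$ is the curvature of $X$ at $P$ with respect to the unit normal $N$ pointing to the convex side.
   Context: A regular plane curve $X$ defined on an open interval is convex if for every point of $X$ the trace of $X$ lies entirely in one closed half-plane determined by the tangent line at that point. A simple convex curve $X$ is called strictly convex if it is of class $C^{(3)}$ and has positive curvature $\kappa$ with respect to the unit normal $N$ pointing to the convex side, i.e. $\kappa(s)=\langle X''(s),N(X(s))\rangle>0$ for an arclength parametrization $X(s)$. For $P=A\in X$ and sufficiently small $h>0$, let $m$ be the line through $P+hN(P)$ parallel to the tangent line $\ell$ of $X$ at $P$, and let $A_1,A_2$ be the two points where $m$ meets $X$. Let $\ell_1,\ell_2$ be the tangent lines of $X$ at $A_1,A_2$, and let $B=\ell_1\cap\ell_2$, $B_1=\ell\cap\ell_1$, $B_2=\ell\cap\ell_2$. Define $T_P(h)=|\triangle AA_1A_2|$ and $U_P(h)=|\triangle BB_1B_2|$ (areas). *)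

From Stdlib Require Import Reals Lra.
From Coquelicot Require Import Coquelicot.
Open Scope R_scope.

(* A plane curve is given by its coordinate functions x, y : R -> R,
   defined on the open interval (a, b), with a, b : Rbar (possibly infinite). *)
Definition in_I (a b : Rbar) (s : R) : Prop := Rbar_lt a s /\ Rbar_lt s b.

Definition pt := (R * R)%type.
Definition dot (u v : pt) : R := fst u * fst v + snd u * snd v.
Definition det2 (u v : pt) : R := fst u * snd v - snd u * fst v.
Definition psub (u v : pt) : pt := (fst u - fst v, snd u - snd v).

Definition Xpt (x y : R -> R) (s : R) : pt := (x s, y s).
Definition Xd (x y : R -> R) (s : R) : pt := (Derive x s, Derive y s).
Definition Xdd (x y : R -> R) (s : R) : pt := (Derive_n x 2 s, Derive_n y 2 s).

Definition tri_area (P Q S : pt) : R := Rabs (det2 (psub Q P) (psub S P)) / 2.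

(* Intersection point of the line through P with direction u and the line
   through Q with direction v (meaningful when det2 u v <> 0):
   P + t u with t = det2 (Q - P) v / det2 u v. *)
Definition line_inter (P u Q v : pt) : pt :=
  let t := det2 (psub Q P) v / det2 u v in
  (fst P + t * fst u, snd P + t * snd u).

Definition C3_on (a b : Rbar) (f : R -> R) : Prop :=
  (forall k s, (k <= 3)%nat -> in_I a b s -> ex_derive_n f k s) /\
  (forall s, in_I a b s -> continuous (Derive_n f 3) s).

Definition regular_arclength (a b : Rbar) (x y : R -> R) : Prop :=
  forall s, in_I a b s -> (Derive x s) ^ 2 + (Derive y s) ^ 2 = 1.

Definition simple_curve (a b : Rbar) (x y : R -> R) : Prop :=
  forall s t, in_I a b s -> in_I a b t -> s <> t -> Xpt x y s <> Xpt x y t.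

(* n is a unit normal at s (one of the two unit vectors orthogonal to the
   unit tangent) such that the whole trace lies in the closed half-plane
   determined by the tangent line at X(s) on the side of n:
   n is the unit normal pointing to the convex side. *)
Definition convex_side_normal (a b : Rbar) (x y : R -> R) (s : R) (n : pt) : Prop :=
  (n = (- Derive y s, Derive x s) \/ n = (Derive y s, - Derive x s)) /\
  (forall t, in_I a b t -> 0 <= dot (psub (Xpt x y t) (Xpt x y s)) n).

Definition convex_curve (a b : Rbar) (x y : R -> R) : Prop :=
  forall s, in_I a b s -> exists n, convex_side_normal a b x y s n.

Definition strictly_convex (a b : Rbar) (x y : R -> R) : Prop :=
  Rbar_lt a b /\
  regular_arclength a b x y /\
  C3_on a b x /\ C3_on a b y /\
  simple_curve a b x y /\
  convex_curve a b x y /\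
  (forall s n, in_I a b s -> convex_side_normal a b x y s n ->
     0 < dot (Xdd x y s) n).

(* X(s) lies on the line m through P + h N parallel to the tangent line at P = X(p) *)
Definition on_m (x y : R -> R) (p : R) (N : pt) (h s : R) : Prop :=
  dot (psub (Xpt x y s) (Xpt x y p)) N = h.

(* T_P(h) for the intersection parameters s1, s2 (A1 = X(s1), A2 = X(s2)) *)
Definition T_area (x y : R -> R) (p s1 s2 : R) : R :=
  tri_area (Xpt x y p) (Xpt x y s1) (Xpt x y s2).

(* U_P(h): B = l1 ∩ l2, B1 = l ∩ l1, B2 = l ∩ l2 *)
Definition U_area (x y : R -> R) (p s1 s2 : R) : R :=
  let B  := line_inter (Xpt x y s1) (Xd x y s1) (Xpt x y s2) (Xd x y s2) in
  let B1 := line_inter (Xpt x y p) (Xd x y p) (Xpt x y s1) (Xd x y s1) in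
  let B2 := line_inter (Xpt x y p) (Xd x y p) (Xpt x y s2) (Xd x y s2) in
  tri_area B B1 B2.

From Stdlib Require Import Reals Lra.
From Coquelicot Require Import Coquelicot.
Open Scope R_scope.

(* In the orthonormal frame (P; tangent, N) the curve has height
   F(s) = kappa (s - p)^2 / 2 + o((s - p)^2) and abscissa (s - p) + o(s - p).  Hence the
   line m at height h meets it at parameters s_i with (s_i - p) / sqrt h -> -/+ W, where
   W = sqrt (2 / kappa), and the tangents there have slopes ~ kappa (s_i - p).  After
   rescaling by sqrt h both triangles become explicit rational expressions in quantities
   with known limits, giving W for T and W / 2 for U.  Convexity is only needed to see
   that m meets the curve in no more than two points: for a third one in between, the
   supporting line there would be m itself, which separates P from the rest of the arc. *)

Section Limits.
Context {T : Type} {F : (T -> Prop) -> Prop} {FF : Filter F}.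

Lemma lim_plus (f g : T -> R) a b :
  filterlim f F (locally a) -> filterlim g F (locally b) ->
  filterlim (fun t => f t + g t) F (locally (a + b)).
Proof. intros Hf Hg; exact (filterlim_comp_2 f g Rplus Hf Hg (filterlim_plus a b)). Qed.

Lemma lim_mult (f g : T -> R) a b :
  filterlim f F (locally a) -> filterlim g F (locally b) ->
  filterlim (fun t => f t * g t) F (locally (a * b)).
Proof. intros Hf Hg; exact (filterlim_comp_2 f g Rmult Hf Hg (@filterlim_mult R_AbsRing a b)). Qed.

Lemma lim_opp (f : T -> R) a :
  filterlim f F (locally a) -> filterlim (fun t => - f t) F (locally (- a)).
Proof. intros Hf; exact (filterlim_comp _ _ _ f Ropp _ _ _ Hf (filterlim_opp a)). Qed.

Lemma lim_minus (f g : T -> R) a b :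
  filterlim f F (locally a) -> filterlim g F (locally b) ->
  filterlim (fun t => f t - g t) F (locally (a - b)).
Proof. intros Hf Hg; apply lim_plus; [exact Hf | exact (lim_opp g b Hg)]. Qed.

Lemma lim_inv (f : T -> R) a :
  filterlim f F (locally a) -> a <> 0 -> filterlim (fun t => / f t) F (locally (/ a)).
Proof.
  intros Hf Ha; apply (filterlim_comp _ _ _ f Rinv _ _ _ Hf).
  apply (filterlim_Rbar_inv (Finite a)); congruence.
Qed.

Lemma lim_div (f g : T -> R) a b :
  filterlim f F (locally a) -> filterlim g F (locally b) -> b <> 0 ->
  filterlim (fun t => f t / g t) F (locally (a / b)).
Proof. intros Hf Hg Hb; apply lim_mult; [exact Hf | exact (lim_inv g b Hg Hb)]. Qed.

Lemma lim_abs (f : T -> R) a :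
  filterlim f F (locally a) -> filterlim (fun t => Rabs (f t)) F (locally (Rabs a)).
Proof. intros Hf; exact (filterlim_comp _ _ _ f Rabs _ _ _ Hf (filterlim_Rabs (Finite a))). Qed.

Lemma lim_sqrt (f : T -> R) a :
  filterlim f F (locally a) -> 0 <= a -> filterlim (fun t => sqrt (f t)) F (locally (sqrt a)).
Proof.
  intros Hf Ha; apply (filterlim_comp _ _ _ f sqrt _ _ _ Hf).
  now apply continuity_pt_filterlim, continuity_pt_sqrt.
Qed.

Lemma lim_neq0 (f : T -> R) l :
  filterlim f F (locally l) -> l <> 0 -> F (fun t => f t <> 0).
Proof.
  intros Hf Hl. assert (Hp : 0 < Rabs l) by now apply Rabs_pos_lt.
  apply (filter_imp (fun t => ball l (mkposreal _ Hp) (f t))).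
  - intros t Ht E. change (Rabs (f t - l) < Rabs l) in Ht.
    rewrite E, Rminus_0_l, Rabs_Ropp in Ht. lra.
  - apply Hf, locally_ball.
Qed.

Lemma lim_difference_quotient (phi : R -> R) x0 l (u : T -> R) :
  is_derive phi x0 l -> filterlim u F (locally x0) -> F (fun t => u t <> x0) ->
  filterlim (fun t => (phi (u t) - phi x0) / (u t - x0)) F (locally l).
Proof.
  intros Hd Hu Hne. apply filterlim_locally. intros eps.
  destruct (proj1 (is_derive_Reals _ _ _) Hd eps (cond_pos eps)) as [del Hdel].
  apply (filter_imp (fun t => ball x0 del (u t) /\ u t <> x0)).
  - intros t [Hb Hn]. change (Rabs ((phi (u t) - phi x0) / (u t - x0) - l) < eps).
    specialize (Hdel (u t - x0) ltac:(lra) Hb).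
    now replace (x0 + (u t - x0)) with (u t) in Hdel by ring.
  - apply filter_and; [apply Hu, locally_ball | exact Hne].
Qed.

End Limits.

Ltac lim_tac := first
 [ eassumption
 | apply filterlim_const
 | eapply lim_abs; lim_tac
 | eapply lim_div; [lim_tac | lim_tac |]
 | eapply lim_inv; [lim_tac |]
 | eapply lim_minus; [lim_tac | lim_tac]
 | eapply lim_plus; [lim_tac | lim_tac]
 | eapply lim_mult; [lim_tac | lim_tac]
 | eapply lim_opp; lim_tac ].

Lemma at_right_pos : at_right 0 (fun h => 0 < h).
Proof. exists (mkposreal 1 Rlt_0_1). now intros. Qed.

Lemma at_right_lt c : 0 < c -> at_right 0 (fun h => h < c).
Proof.
  intros Hc. exists (mkposreal c Hc). intros h Hh _.
  change (Rabs (h - 0) < c) in Hh. apply Rabs_def2 in Hh. lra.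
Qed.

Lemma eq_div_sqrt_mul u h : 0 < h -> u = u / sqrt h * sqrt h.
Proof. intros Hh; assert (0 < sqrt h) by now apply sqrt_lt_R0. field; lra. Qed.

Lemma lim_scaled_by_sqrt (u : R -> R) c :
  filterlim (fun h => h / u h ^ 2) (at_right 0) (locally c) -> 0 < c ->
  at_right 0 (fun h => 0 < u h) ->
  filterlim (fun h => u h / sqrt h) (at_right 0) (locally (sqrt (/ c))).
Proof.
  intros Hlim Hc Hu. apply filterlim_ext_loc with (fun h => sqrt (/ (h / u h ^ 2))).
  - apply (filter_imp (fun h => 0 < h /\ 0 < u h)); [|now apply filter_and; [apply at_right_pos|]].
    intros h [Hh Hpos]. assert (Hs : 0 < sqrt h) by now apply sqrt_lt_R0.
    rewrite <- (sqrt_sqrt h) at 1 by lra.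
    replace (/ (sqrt h * sqrt h / u h ^ 2)) with ((u h / sqrt h) ^ 2) by (field; lra).
    apply sqrt_pow2, Rlt_le, Rdiv_lt_0_compat; assumption.
  - apply lim_sqrt; [apply lim_inv; [exact Hlim | lra] | apply Rlt_le, Rinv_0_lt_compat, Hc].
Qed.

Lemma lim_derive_div_sqrt (phi : R -> R) p l (u : R -> R) w :
  is_derive phi p l -> phi p = 0 ->
  filterlim u (at_right 0) (locally p) -> at_right 0 (fun h => u h <> p) ->
  filterlim (fun h => (u h - p) / sqrt h) (at_right 0) (locally w) ->
  filterlim (fun h => phi (u h) / sqrt h) (at_right 0) (locally (l * w)).
Proof.
  intros Hd H0 Hu Hne Hw.
  apply filterlim_ext_loc with (fun h => (phi (u h) - phi p) / (u h - p) * ((u h - p) / sqrt h)).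
  - apply (filter_imp (fun h => 0 < h /\ u h <> p)); [| now apply filter_and; [apply at_right_pos |]].
    intros h [Hh Hn]. assert (0 < sqrt h) by now apply sqrt_lt_R0.
    rewrite H0; field; lra.
  - apply lim_mult; [now apply lim_difference_quotient | exact Hw].
Qed.

Lemma in_I_ball a b p : in_I a b p ->
  exists r, 0 < r /\ forall s, Rabs (s - p) < r -> in_I a b s.
Proof.
  intros Hp. destruct (open_and _ _ (open_Rbar_gt a) (open_Rbar_lt b) p Hp) as [r Hr].
  exists r; split; [apply cond_pos | intros s Hs; exact (Hr s Hs)].
Qed.

Lemma IVT_open (f : R -> R) u v c : u < v ->
  (forall z, u <= z <= v -> continuity_pt f z) ->
  f u < c < f v \/ f v < c < f u -> exists z, u < z < v /\ f z = c.
Proof.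
  intros Huv Hf [Hc | Hc].
  - destruct (Ranalysis5.IVT_interv (fun z => f z - c) u v) as [z [Hz Ez]]; simpl; try lra.
    + intros z Hz; apply continuity_pt_minus; [now apply Hf | apply continuity_pt_const; now intros ? ?].
    + exists z. assert (z <> u) by (intros ->; lra). assert (z <> v) by (intros ->; lra). lra.
  - destruct (Ranalysis5.IVT_interv (fun z => c - f z) u v) as [z [Hz Ez]]; simpl; try lra.
    + intros z Hz; apply continuity_pt_minus; [apply continuity_pt_const; now intros ? ? | now apply Hf].
    + exists z. assert (z <> u) by (intros ->; lra). assert (z <> v) by (intros ->; lra). lra.
Qed.

Lemma derive_linear_bound (phi : R -> R) p k e : is_derive phi p k -> 0 < e ->
  exists d, 0 < d /\ forall s, Rabs (s - p) < d ->
    Rabs (phi s - phi p - k * (s - p)) <= e * Rabs (s - p).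
Proof.
  intros Hd He. destruct (proj1 (is_derive_Reals _ _ _) Hd e He) as [d Hdel].
  exists d; split; [apply cond_pos | intros s Hs].
  destruct (Req_dec s p) as [-> | Hne].
  - rewrite !Rminus_diag, Rmult_0_r, Rminus_0_r, Rabs_R0; lra.
  - specialize (Hdel (s - p) ltac:(lra) Hs). replace (p + (s - p)) with s in Hdel by ring.
    replace (phi s - phi p - k * (s - p)) with (((phi s - phi p) / (s - p) - k) * (s - p))
      by (field; lra).
    rewrite Rabs_mult; apply Rmult_le_compat_r; [apply Rabs_pos | lra].
Qed.

Lemma mvt_quadratic_bound (phi dphi : R -> R) p r k e :
  (forall s, Rabs (s - p) < r -> is_derive phi s (dphi s)) -> phi p = 0 -> 0 <= e ->
  (forall s, Rabs (s - p) < r -> Rabs (dphi s - k * (s - p)) <= e * Rabs (s - p)) ->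
  forall s, Rabs (s - p) < r -> Rabs (phi s - k * (s - p) ^ 2 / 2) <= e * (s - p) ^ 2.
Proof.
  intros Hder H0 He Hb s Hs.
  set (psi t := phi t - k * (t - p) ^ 2 / 2).
  set (dpsi t := dphi t - k * (t - p)).
  assert (Hin : forall c, Rmin p s <= c <= Rmax p s -> Rabs (c - p) <= Rabs (s - p)).
  { intros c; unfold Rmin, Rmax; destruct (Rle_dec p s); intros Hc;
      [rewrite !Rabs_pos_eq | rewrite !Rabs_left1]; lra. }
  assert (HD : forall c, Rabs (c - p) < r -> is_derive psi c (dpsi c)).
  { intros c Hc. apply (is_derive_minus phi (fun t => k * (t - p) ^ 2 / 2)); [now apply Hder |].
    auto_derive; [auto | field]. }
  destruct (MVT_gen psi p s dpsi) as [c [Hc Heq]].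
  - intros c Hc; apply HD. specialize (Hin c ltac:(lra)). lra.
  - intros c Hc; apply continuity_pt_filterlim.
    apply (ex_derive_continuous psi); exists (dpsi c); apply HD. specialize (Hin c Hc); lra.
  - change (Rabs (psi s) <= e * (s - p) ^ 2).
    replace (psi s) with (dpsi c * (s - p)) by (rewrite <- Heq; unfold psi; rewrite H0; field).
    specialize (Hin c Hc).
    assert (Hdc : Rabs (dpsi c) <= e * Rabs (s - p)) by (apply Rle_trans with (e * Rabs (c - p));
      [apply Hb; lra | apply Rmult_le_compat_l; auto]).
    rewrite Rabs_mult, <- (Rabs_pos_eq ((s - p) ^ 2)) by apply pow2_ge_0.
    rewrite <- RPow_abs. pose proof (Rabs_pos (s - p)). nra.
Qed.

Lemma quadratic_approx (phi dphi : R -> R) p r0 k e :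
  0 < r0 -> (forall s, Rabs (s - p) < r0 -> is_derive phi s (dphi s)) ->
  phi p = 0 -> dphi p = 0 -> is_derive dphi p k -> 0 < e ->
  exists r, 0 < r <= r0 /\
    forall s, Rabs (s - p) < r -> Rabs (phi s - k * (s - p) ^ 2 / 2) <= e * (s - p) ^ 2.
Proof.
  intros Hr0 Hder H0 Hd0 Hdd He.
  destruct (derive_linear_bound dphi p k e Hdd He) as [d [Hd Hlin]].
  exists (Rmin r0 d); split; [split; [now apply Rmin_pos | apply Rmin_l] |].
  pose proof (Rmin_l r0 d); pose proof (Rmin_r r0 d).
  apply (mvt_quadratic_bound phi dphi); [intros s Hs; apply Hder; lra | exact H0 | lra |].
  intros s Hs. rewrite <- (Rminus_0_r (dphi s)) at 1. rewrite <- Hd0. apply Hlin; lra.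
Qed.

Lemma is_derive_dot_Xpt (x y : R -> R) P0 V s : ex_derive x s -> ex_derive y s ->
  is_derive (fun t => dot (psub (Xpt x y t) P0) V) s (dot (Xd x y s) V).
Proof. intros Hx Hy; unfold dot, psub, Xpt, Xd; simpl; auto_derive; [tauto | rewrite !Rmult_1_l; reflexivity]. Qed.

Lemma is_derive_dot_Xd (x y : R -> R) V s :
  ex_derive (Derive x) s -> ex_derive (Derive y) s ->
  is_derive (fun t => dot (Xd x y t) V) s (dot (Xdd x y s) V).
Proof. intros Hx Hy; unfold dot, Xd, Xdd; simpl; auto_derive; [tauto | rewrite !Rmult_1_l; reflexivity]. Qed.

Definition unit_vec (u : pt) : Prop := fst u ^ 2 + snd u ^ 2 = 1.
Definition normal_to (T N : pt) : Prop := N = (- snd T, fst T) \/ N = (snd T, - fst T).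

Definition frame_vec (T N v : pt) : pt := (dot v T, dot v N).
Definition frame_pt (O T N Z : pt) : pt := frame_vec T N (psub Z O).

Section Frame.
Variables (T N : pt).
Hypothesis T_unit : unit_vec T.
Hypothesis N_normal : normal_to T N.

Lemma dot_TT : dot T T = 1.
Proof. rewrite <- T_unit; unfold dot; ring. Qed.

Lemma dot_TN : dot T N = 0.
Proof. destruct N_normal as [-> | ->]; unfold dot; simpl; ring. Qed.

Lemma dot_NN : dot N N = 1.
Proof. rewrite <- T_unit; destruct N_normal as [-> | ->]; unfold dot; simpl; ring. Qed.

Lemma frame_vec_T : frame_vec T N T = (1, 0).
Proof. unfold frame_vec; rewrite dot_TT, dot_TN; reflexivity. Qed.

Lemma dot_frame_decomp v n : dot v n = dot v T * dot n T + dot v N * dot n N.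
Proof.
  destruct T as [t1 t2]; unfold unit_vec, dot in *; cbn [fst snd] in *.
  destruct v as [v1 v2], n as [n1 n2]; simpl.
  destruct N_normal as [-> | ->]; simpl;
    (transitivity ((t1 ^ 2 + t2 ^ 2) * (v1 * n1 + v2 * n2)); [rewrite T_unit | ]; ring).
Qed.

Lemma det2_frame_vec : exists sg, Rabs sg = 1 /\
  forall v w, det2 (frame_vec T N v) (frame_vec T N w) = sg * det2 v w.
Proof.
  destruct T as [t1 t2]; unfold unit_vec, frame_vec, det2, dot in *; cbn [fst snd] in *.
  destruct N_normal as [-> | ->]; [exists 1 | exists (-1)];
    (split; [rewrite ?Rabs_R1, ?Rabs_left by lra; lra | intros [v1 v2] [w1 w2]; cbn [fst snd]]).
  - transitivity ((t1 ^ 2 + t2 ^ 2) * (v1 * w2 - v2 * w1)); [ring | rewrite T_unit; ring].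
  - transitivity (- (t1 ^ 2 + t2 ^ 2) * (v1 * w2 - v2 * w1)); [ring | rewrite T_unit; ring].
Qed.

Lemma psub_frame_pt O Z1 Z2 :
  psub (frame_pt O T N Z1) (frame_pt O T N Z2) = frame_vec T N (psub Z1 Z2).
Proof. destruct O, Z1, Z2; unfold frame_pt, frame_vec, psub, dot; simpl; f_equal; ring. Qed.

Lemma frame_pt_origin O : frame_pt O T N O = (0, 0).
Proof. destruct O; unfold frame_pt, frame_vec, psub, dot; simpl; f_equal; ring. Qed.

Lemma frame_pt_inj O Z1 Z2 : frame_pt O T N Z1 = frame_pt O T N Z2 -> Z1 = Z2.
Proof.
  intros E. assert (E0 : frame_vec T N (psub Z1 Z2) = (0, 0)).
  { rewrite <- (psub_frame_pt O), E. destruct (frame_pt O T N Z2); unfold psub; simpl; f_equal; ring. }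
  unfold frame_vec in E0; injection E0 as E1 E2.
  pose proof (dot_frame_decomp (psub Z1 Z2) (1, 0)) as D1.
  pose proof (dot_frame_decomp (psub Z1 Z2) (0, 1)) as D2.
  rewrite E1, E2 in D1, D2. destruct Z1, Z2; unfold psub, dot in D1, D2; simpl in *.
  f_equal; lra.
Qed.

Lemma tri_area_frame O A B C :
  tri_area A B C = tri_area (frame_pt O T N A) (frame_pt O T N B) (frame_pt O T N C).
Proof.
  destruct det2_frame_vec as [sg [Hsg Hdet]].
  unfold tri_area; rewrite !psub_frame_pt, Hdet, Rabs_mult.
  rewrite Hsg; field.
Qed.

(* Holds even for parallel lines, where both sides use the junk value [/ 0 = 0]. *)
Lemma line_inter_frame O P u Q v :
  frame_pt O T N (line_inter P u Q v) =
  line_inter (frame_pt O T N P) (frame_vec T N u) (frame_pt O T N Q) (frame_vec T N v).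
Proof.
  destruct det2_frame_vec as [sg [Hsg Hdet]].
  unfold line_inter at 2; rewrite psub_frame_pt, !Hdet.
  replace (sg * det2 (psub Q P) v / (sg * det2 u v)) with (det2 (psub Q P) v / det2 u v)
    by (assert (sg <> 0) by (intros ->; rewrite Rabs_R0 in Hsg; lra);
        unfold Rdiv; rewrite Rinv_mult, <- (Rmult_1_l (_ * / det2 u v)), <- (Rinv_r sg) by assumption;
        ring).
  unfold line_inter; set (t := det2 (psub Q P) v / det2 u v).
  destruct O, P, u; unfold frame_pt, frame_vec, psub, dot; simpl; f_equal; ring.
Qed.

End Frame.

Lemma tri_area_swap P Q S : tri_area P Q S = tri_area P S Q.
Proof.
  unfold tri_area; rewrite <- Rabs_Ropp.
  destruct P, Q, S; unfold det2, psub; simpl; do 2 f_equal; ring.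
Qed.

Lemma line_inter_swap P u Q v : det2 u v <> 0 -> line_inter P u Q v = line_inter Q v P u.
Proof.
  destruct P, u as [u1 u2], Q, v as [v1 v2]; unfold line_inter, det2, psub; simpl; intros H.
  assert (v1 * u2 - v2 * u1 <> 0) by lra. f_equal; field; auto.
Qed.

Lemma U_area_swap x y p s1 s2 : det2 (Xd x y s1) (Xd x y s2) <> 0 ->
  U_area x y p s1 s2 = U_area x y p s2 s1.
Proof. intros H; unfold U_area; rewrite (line_inter_swap (Xpt x y s1)) by exact H; apply tri_area_swap. Qed.

Lemma tri_area_chord_scaled G1 G2 h s g1 g2 : 0 < s -> h = s * s ->
  G1 = g1 * s -> G2 = g2 * s ->
  tri_area (0, 0) (G1, h) (G2, h) / (h * s) = Rabs (g2 - g1) / 2.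
Proof.
  intros Hs -> -> ->; unfold tri_area, det2, psub; simpl.
  match goal with |- Rabs ?E / 2 / _ = _ => replace E with ((g1 - g2) * (s * s * s)) by ring end.
  rewrite Rabs_mult, (Rabs_pos_eq (s * s * s)), Rabs_minus_sym by (apply Rlt_le, Rmult_lt_0_compat; nra).
  field; lra.
Qed.

(* [(g_i - al_i / c_i) s] is the abscissa of the point where the tangent at
   [A_i] meets the first axis, and the second factor is the ordinate of the
   intersection of the two tangents, divided by [h]. *)
Lemma tri_area_tangents_scaled G1 G2 be1 be2 h s g1 g2 al1 al2 c1 c2 : 0 < s -> h = s * s ->
  G1 = g1 * s -> G2 = g2 * s -> be1 = c1 * s -> be2 = c2 * s ->
  c1 <> 0 -> c2 <> 0 -> al1 * c2 - c1 * al2 <> 0 ->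
  tri_area (line_inter (G1, h) (al1, be1) (G2, h) (al2, be2))
           (line_inter (0, 0) (1, 0) (G1, h) (al1, be1))
           (line_inter (0, 0) (1, 0) (G2, h) (al2, be2)) / (h * s)
  = Rabs ((g2 - al2 / c2) - (g1 - al1 / c1)) *
    Rabs (1 + (g2 - g1) * c1 * c2 / (al1 * c2 - c1 * al2)) / 2.
Proof.
  intros Hs -> -> -> -> -> Hc1 Hc2 HD.
  unfold tri_area, line_inter, det2, psub; simpl.
  match goal with |- Rabs ?E / 2 / _ = _ =>
    replace E with (((g2 - al2 / c2) - (g1 - al1 / c1)) *
      (1 + (g2 - g1) * c1 * c2 / (al1 * c2 - c1 * al2)) * (s * s * s)) end.
  - rewrite Rabs_mult, (Rabs_pos_eq (s * s * s)), Rabs_mult by (apply Rlt_le, Rmult_lt_0_compat; nra).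
    field; lra.
  - replace (al1 * (c2 * s) - c1 * s * al2) with ((al1 * c2 - c1 * al2) * s) by ring.
    field; repeat split; lra.
Qed.

(* In the frame at [P], [(G_i h, h)] are the points [A_i] and [(al_i h, be_i h)]
   tangent vectors there. *)
Section ScaledAreas.
Variables (G1 G2 al1 al2 be1 be2 : R -> R) (W k : R).
Hypothesis W_pos : 0 < W.
Hypothesis kWW : k * (W * W) = 2.
Hypothesis lim_G1 : filterlim (fun h => G1 h / sqrt h) (at_right 0) (locally (- W)).
Hypothesis lim_G2 : filterlim (fun h => G2 h / sqrt h) (at_right 0) (locally W).
Hypothesis lim_al1 : filterlim al1 (at_right 0) (locally 1).
Hypothesis lim_al2 : filterlim al2 (at_right 0) (locally 1).
Hypothesis lim_be1 : filterlim (fun h => be1 h / sqrt h) (at_right 0) (locally (- (k * W))).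
Hypothesis lim_be2 : filterlim (fun h => be2 h / sqrt h) (at_right 0) (locally (k * W)).

Lemma kW_pos : 0 < k * W.
Proof. assert (0 < k * W * W) by lra. nra. Qed.

Lemma scaled_tangents_nondegenerate : at_right 0 (fun h =>
  be1 h / sqrt h <> 0 /\ be2 h / sqrt h <> 0 /\
  al1 h * (be2 h / sqrt h) - be1 h / sqrt h * al2 h <> 0).
Proof.
  pose proof kW_pos.
  assert (HD : filterlim (fun h => al1 h * (be2 h / sqrt h) - be1 h / sqrt h * al2 h)
                 (at_right 0) (locally (1 * (k * W) - - (k * W) * 1))) by lim_tac.
  repeat apply filter_and; [apply (lim_neq0 _ _ lim_be1) | apply (lim_neq0 _ _ lim_be2)
                           | apply (lim_neq0 _ _ HD)]; lra.
Qed.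

Lemma chord_area_lim :
  filterlim (fun h => tri_area (0, 0) (G1 h, h) (G2 h, h) / (h * sqrt h)) (at_right 0) (locally W).
Proof.
  apply filterlim_ext_loc with (fun h => Rabs (G2 h / sqrt h - G1 h / sqrt h) / 2).
  - apply (filter_imp _ _ (fun h Hh => eq_sym (tri_area_chord_scaled _ _ h (sqrt h) _ _
      (sqrt_lt_R0 h Hh) (eq_sym (sqrt_sqrt h (Rlt_le _ _ Hh)))
      (eq_div_sqrt_mul (G1 h) h Hh) (eq_div_sqrt_mul (G2 h) h Hh)))).
    exact at_right_pos.
  - replace (locally W) with (locally (Rabs (W - - W) / 2)) by (rewrite Rabs_pos_eq by lra; f_equal; field).
    lim_tac; lra.
Qed.

Lemma tangent_triangle_area_lim :
  filterlim (fun h => tri_area (line_inter (G1 h, h) (al1 h, be1 h) (G2 h, h) (al2 h, be2 h))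
                                (line_inter (0, 0) (1, 0) (G1 h, h) (al1 h, be1 h))
                                (line_inter (0, 0) (1, 0) (G2 h, h) (al2 h, be2 h)) / (h * sqrt h))
    (at_right 0) (locally (W / 2)).
Proof.
  pose proof kW_pos.
  set (g1 h := G1 h / sqrt h); set (g2 h := G2 h / sqrt h).
  set (c1 h := be1 h / sqrt h); set (c2 h := be2 h / sqrt h).
  apply filterlim_ext_loc with (fun h =>
    Rabs ((g2 h - al2 h / c2 h) - (g1 h - al1 h / c1 h)) *
    Rabs (1 + (g2 h - g1 h) * c1 h * c2 h / (al1 h * c2 h - c1 h * al2 h)) / 2).
  - generalize (filter_and _ _ at_right_pos scaled_tangents_nondegenerate); apply filter_imp.
    intros h (Hh & Hc1 & Hc2 & HD). symmetry.
    apply tri_area_tangents_scaled; try apply eq_div_sqrt_mul; auto.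
    + now apply sqrt_lt_R0.
    + now rewrite sqrt_sqrt by lra.
  - replace (W / 2) with (Rabs ((W - 1 / (k * W)) - (- W - 1 / - (k * W))) *
      Rabs (1 + (W - - W) * - (k * W) * (k * W) / (1 * (k * W) - - (k * W) * 1)) / 2).
    + lim_tac; lra.
    + assert (Hk : k = 2 / (W * W)) by (rewrite <- kWW; field; lra).
      replace ((W - 1 / (k * W)) - (- W - 1 / - (k * W))) with W by (rewrite Hk; field; lra).
      replace (1 + (W - - W) * - (k * W) * (k * W) / (1 * (k * W) - - (k * W) * 1)) with (-1)
        by (rewrite Hk; field; lra).
      rewrite Rabs_pos_eq, Rabs_left by lra. field.
Qed.

End ScaledAreas.

Section Curve.
Variables (a b : Rbar) (x y : R -> R) (p : R) (N : pt).
Hypothesis x_derivable : forall s, in_I a b s -> ex_derive x s.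
Hypothesis y_derivable : forall s, in_I a b s -> ex_derive y s.
Hypothesis x_derivable2 : ex_derive (Derive x) p.
Hypothesis y_derivable2 : ex_derive (Derive y) p.
Hypothesis arclength : regular_arclength a b x y.
Hypothesis simple : simple_curve a b x y.
Hypothesis convex : convex_curve a b x y.
Hypothesis p_in : in_I a b p.
Hypothesis N_convex_side : convex_side_normal a b x y p N.
Hypothesis curvature_pos : 0 < dot (Xdd x y p) N.

Definition tangent : pt := Xd x y p.
Definition kappa : R := dot (Xdd x y p) N.
(* Coordinates in the frame (P; tangent, N), so that [on_m] reads [height s = h]. *)
Definition abscissa (s : R) : R := dot (psub (Xpt x y s) (Xpt x y p)) tangent.
Definition height (s : R) : R := dot (psub (Xpt x y s) (Xpt x y p)) N.
Definition abscissa' (s : R) : R := dot (Xd x y s) tangent.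
Definition height' (s : R) : R := dot (Xd x y s) N.

Lemma tangent_unit : unit_vec tangent.
Proof. exact (arclength p p_in). Qed.

Lemma N_normal_tangent : normal_to tangent N.
Proof. exact (proj1 N_convex_side). Qed.

Lemma height_p : height p = 0.
Proof. unfold height, dot, psub; simpl; ring. Qed.

Lemma abscissa_p : abscissa p = 0.
Proof. unfold abscissa, dot, psub; simpl; ring. Qed.

Lemma height'_p : height' p = 0.
Proof. exact (dot_TN _ _ N_normal_tangent). Qed.

Lemma abscissa'_p : abscissa' p = 1.
Proof. exact (dot_TT _ tangent_unit). Qed.

Lemma is_derive_height s : in_I a b s -> is_derive height s (height' s).
Proof. intros Hs; apply is_derive_dot_Xpt; auto. Qed.

Lemma is_derive_abscissa : is_derive abscissa p 1.
Proof. rewrite <- abscissa'_p; apply is_derive_dot_Xpt; auto. Qed.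

Lemma is_derive_height' : is_derive height' p kappa.
Proof. apply is_derive_dot_Xd; auto. Qed.

Lemma abscissa'_continuous : filterlim abscissa' (locally p) (locally 1).
Proof.
  rewrite <- abscissa'_p. apply (ex_derive_continuous abscissa').
  exists (dot (Xdd x y p) tangent); apply is_derive_dot_Xd; auto.
Qed.

Lemma height_approx e : 0 < e -> exists r, 0 < r /\ forall s, Rabs (s - p) < r ->
  in_I a b s /\ Rabs (height s - kappa * (s - p) ^ 2 / 2) <= e * (s - p) ^ 2.
Proof.
  intros He. destruct (in_I_ball a b p p_in) as [r0 [Hr0 Hball]].
  destruct (quadratic_approx height height' p r0 kappa e Hr0) as [r [Hr Happrox]];
    [intros s Hs; apply is_derive_height, Hball, Hs | exact height_p | exact height'_p
    | exact is_derive_height' | exact He |].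
  exists r; split; [lra | intros s Hs; split; [apply Hball; lra | now apply Happrox]].
Qed.

Lemma height_lower_bound : exists r, 0 < r /\ forall s, Rabs (s - p) < r ->
  in_I a b s /\ kappa * (s - p) ^ 2 / 4 <= height s.
Proof.
  destruct (height_approx (kappa / 4)) as [r [Hr Happrox]]; [unfold kappa; lra |].
  exists r; split; [exact Hr | intros s Hs].
  destruct (Happrox s Hs) as [Hin Hq]; split; [exact Hin |].
  apply Rabs_le_between in Hq; lra.
Qed.

(* The supporting line at the middle point [M] of three points of the line [m]
   must be [m] itself, which would separate [P] (height 0) from [q]. *)
Lemma no_middle_level_point h q M A C : 0 < h < height q ->
  in_I a b q -> in_I a b M -> in_I a b A -> in_I a b C ->
  height M = h -> height A = h -> height C = h ->
  (abscissa A - abscissa M) * (abscissa C - abscissa M) < 0 -> False.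
Proof.
  intros Hh Hq HM HA HC FM FA FC Hprod.
  destruct (convex M HM) as [n [Hn Hsupp]].
  set (al := dot n tangent); set (be := dot n N).
  assert (Hdec : forall t, dot (psub (Xpt x y t) (Xpt x y M)) n =
            (abscissa t - abscissa M) * al + (height t - height M) * be).
  { intros t. rewrite (dot_frame_decomp _ _ tangent_unit N_normal_tangent).
    unfold abscissa, height, al, be, dot, psub; simpl; ring. }
  assert (Hunit : al * al + be * be = 1).
  { rewrite <- (dot_NN (Xd x y M) n (arclength M HM) Hn).
    rewrite (dot_frame_decomp _ _ tangent_unit N_normal_tangent n n); reflexivity. }
  pose proof (Hsupp A HA) as SA; pose proof (Hsupp C HC) as SC.
  pose proof (Hsupp p p_in) as SP; pose proof (Hsupp q Hq) as SQ.
  rewrite Hdec in SA, SC, SP, SQ. rewrite height_p in SP.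
  rewrite FA, FM, Rminus_diag, Rmult_0_l, Rplus_0_r in SA.
  rewrite FC, FM, Rminus_diag, Rmult_0_l, Rplus_0_r in SC.
  rewrite FM in SP, SQ.
  assert (Hal : al = 0).
  { destruct (Req_dec al 0) as [E | E]; [exact E | exfalso].
    assert (0 < al * al) by (apply Rsqr_pos_lt; exact E).
    assert (0 <= (abscissa A - abscissa M) * al * ((abscissa C - abscissa M) * al))
      by (apply Rmult_le_pos; assumption).
    nra. }
  rewrite Hal in SP, SQ, Hunit. assert (Hbe : be = 0) by nra. rewrite Hbe in Hunit. lra.
Qed.

Lemma level_abscissa_inj s t : in_I a b s -> in_I a b t -> s <> t ->
  height s = height t -> abscissa s <> abscissa t.
Proof.
  intros Hs Ht Hne HF HG. apply (simple s t Hs Ht Hne).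
  apply (frame_pt_inj tangent N tangent_unit N_normal_tangent (Xpt x y p)).
  change ((abscissa s, height s) = (abscissa t, height t)); congruence.
Qed.

Lemma at_most_two_level_points h q s t w : 0 < h < height q ->
  in_I a b q -> in_I a b s -> in_I a b t -> in_I a b w -> s <> t -> t <> w -> s <> w ->
  height s = h -> height t = h -> height w = h -> False.
Proof.
  intros Hh Hq Hs Ht Hw n1 n2 n3 Fs Ft Fw.
  assert (G1 : abscissa s <> abscissa t) by (apply level_abscissa_inj; congruence).
  assert (G2 : abscissa t <> abscissa w) by (apply level_abscissa_inj; congruence).
  assert (G3 : abscissa s <> abscissa w) by (apply level_abscissa_inj; congruence).
  destruct (Rlt_le_dec (abscissa s) (abscissa t));
  destruct (Rlt_le_dec (abscissa t) (abscissa w));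
  destruct (Rlt_le_dec (abscissa s) (abscissa w));
  first [ apply (no_middle_level_point h q s t w); auto; nra
        | apply (no_middle_level_point h q t s w); auto; nra
        | apply (no_middle_level_point h q w s t); auto; nra ].
Qed.

Lemma level_param_ratio_lim (u : R -> R) :
  filterlim u (at_right 0) (locally p) ->
  at_right 0 (fun h => u h <> p /\ height (u h) = h) ->
  filterlim (fun h => h / (u h - p) ^ 2) (at_right 0) (locally (kappa / 2)).
Proof.
  intros Hu Hev. apply filterlim_locally; intros eps. pose proof (cond_pos eps).
  destruct (height_approx (eps / 2)) as [r [Hr Happrox]]; [lra |].
  apply (filter_imp (fun h => ball p r (u h) /\ u h <> p /\ height (u h) = h));
    [| apply filter_and; [apply Hu, (locally_ball p (mkposreal r Hr)) | exact Hev]].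
  intros h (Hb & Hne & Hf). change (Rabs (h / (u h - p) ^ 2 - kappa / 2) < eps).
  destruct (Happrox (u h) Hb) as [_ Hq]. rewrite Hf in Hq.
  assert (Hu2 : 0 < (u h - p) ^ 2) by (rewrite <- Rsqr_pow2; apply Rsqr_pos_lt; lra).
  replace (h / (u h - p) ^ 2 - kappa / 2) with ((h - kappa * (u h - p) ^ 2 / 2) * / (u h - p) ^ 2)
    by (field; lra).
  rewrite Rabs_mult, (Rabs_pos_eq (/ _)) by (apply Rlt_le, Rinv_0_lt_compat, Hu2).
  apply Rle_lt_trans with (eps / 2 * (u h - p) ^ 2 * / (u h - p) ^ 2).
  - apply Rmult_le_compat_r; [apply Rlt_le, Rinv_0_lt_compat, Hu2 | exact Hq].
  - rewrite Rmult_assoc, Rinv_r by lra; lra.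
Qed.

Lemma T_area_frame s1 s2 :
  T_area x y p s1 s2 = tri_area (0, 0) (abscissa s1, height s1) (abscissa s2, height s2).
Proof.
  unfold T_area; rewrite (tri_area_frame tangent N tangent_unit N_normal_tangent (Xpt x y p)).
  now rewrite frame_pt_origin.
Qed.

Lemma U_area_frame s1 s2 : U_area x y p s1 s2 =
  tri_area (line_inter (abscissa s1, height s1) (abscissa' s1, height' s1)
                       (abscissa s2, height s2) (abscissa' s2, height' s2))
           (line_inter (0, 0) (1, 0) (abscissa s1, height s1) (abscissa' s1, height' s1))
           (line_inter (0, 0) (1, 0) (abscissa s2, height s2) (abscissa' s2, height' s2)).
Proof.
  unfold U_area; change (Xd x y p) with tangent.
  rewrite (tri_area_frame tangent N tangent_unit N_normal_tangent (Xpt x y p)), !line_inter_frame,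
    frame_pt_origin, frame_vec_T by (apply tangent_unit || apply N_normal_tangent).
  reflexivity.
Qed.

Lemma det2_Xd_neq0 s1 s2 : abscissa' s1 * height' s2 - height' s1 * abscissa' s2 <> 0 ->
  det2 (Xd x y s1) (Xd x y s2) <> 0.
Proof.
  destruct (det2_frame_vec tangent N tangent_unit N_normal_tangent) as [sg [_ Hdet]].
  intros H E; apply H.
  change (det2 (frame_vec tangent N (Xd x y s1)) (frame_vec tangent N (Xd x y s2)) = 0).
  rewrite Hdet, E; ring.
Qed.

Section Level.
Variable r : R.
Hypothesis r_pos : 0 < r.
Hypothesis r_bound : forall s, Rabs (s - p) < r -> in_I a b s /\ kappa * (s - p) ^ 2 / 4 <= height s.

Lemma level_points : exists del, 0 < del /\ forall h, 0 < h < del ->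
  exists s1 s2, p - r < s1 < p /\ p < s2 < p + r /\ height s1 = h /\ height s2 = h /\
    forall s, in_I a b s -> height s = h -> s = s1 \/ s = s2.
Proof.
  assert (Hk : 0 < kappa) by exact curvature_pos.
  assert (0 < (r / 2) ^ 2) by (apply pow_lt; lra).
  exists (kappa * (r / 2) ^ 2 / 4); split; [nra | intros h Hh].
  assert (Hin : forall s, p - r / 2 <= s <= p + r / 2 -> in_I a b s).
  { intros s Hs; apply r_bound, Rabs_def1; lra. }
  assert (Hcont : forall s, p - r / 2 <= s <= p + r / 2 -> continuity_pt height s).
  { intros s Hs; apply continuity_pt_filterlim, (ex_derive_continuous height).
    exists (height' s); apply is_derive_height, Hin, Hs. }
  destruct (r_bound (p + r / 2)) as [Hq Fq]; [rewrite Rabs_pos_eq; lra |].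
  destruct (r_bound (p - r / 2)) as [_ Fq']; [rewrite Rabs_left; lra |].
  replace (p + r / 2 - p) with (r / 2) in Fq by ring.
  replace (p - r / 2 - p) with (- (r / 2)) in Fq' by ring.
  destruct (IVT_open height (p - r / 2) p h) as [s1 [Hs1 E1]];
    [lra | intros s Hs; apply Hcont; lra | rewrite height_p; right; nra |].
  destruct (IVT_open height p (p + r / 2) h) as [s2 [Hs2 E2]];
    [lra | intros s Hs; apply Hcont; lra | rewrite height_p; left; nra |].
  exists s1, s2; repeat split; try lra.
  intros s Hs Fs. destruct (Req_dec s s1); [now left |]. destruct (Req_dec s s2); [now right |].
  exfalso; apply (at_most_two_level_points h (p + r / 2) s s1 s2); auto; try lra; apply Hin; lra.
Qed.

Lemma level_param_lim (u : R -> R) :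
  at_right 0 (fun h => Rabs (u h - p) < r /\ height (u h) = h) ->
  filterlim u (at_right 0) (locally p).
Proof.
  intros Hev. apply filterlim_locally; intros eps.
  assert (Hk : 0 < kappa) by exact curvature_pos. pose proof (cond_pos eps).
  apply (filter_imp (fun h => (Rabs (u h - p) < r /\ height (u h) = h) /\ h < kappa * eps ^ 2 / 4));
    [| apply filter_and; [exact Hev | apply at_right_lt; assert (0 < eps ^ 2) by (apply pow_lt; lra); nra]].
  intros h [[Hr Hf] Hh]. change (Rabs (u h - p) < eps).
  destruct (r_bound _ Hr) as [_ Hb]. rewrite Hf in Hb.
  assert ((u h - p) ^ 2 < eps ^ 2) by nra. apply Rabs_def1; nra.
Qed.

Lemma level_param_scaled_lim (u : R -> R) sg : sg * sg = 1 ->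
  at_right 0 (fun h => Rabs (u h - p) < r /\ 0 < sg * (u h - p) /\ height (u h) = h) ->
  filterlim (fun h => (u h - p) / sqrt h) (at_right 0) (locally (sg * sqrt (/ (kappa / 2)))).
Proof.
  intros Hsg Hev. assert (Hk : 0 < kappa) by exact curvature_pos.
  assert (Hratio : filterlim (fun h => h / (u h - p) ^ 2) (at_right 0) (locally (kappa / 2))).
  { apply level_param_ratio_lim.
    - apply level_param_lim; generalize Hev; apply filter_imp; tauto.
    - generalize Hev; apply filter_imp; intros h (_ & Hpos & Hf); split; [nra | exact Hf]. }
  assert (Hv : filterlim (fun h => sg * (u h - p) / sqrt h) (at_right 0) (locally (sqrt (/ (kappa / 2))))).
  { apply lim_scaled_by_sqrt; [| lra | generalize Hev; apply filter_imp; tauto].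
    eapply filterlim_ext; [| exact Hratio]. intros h; simpl.
    f_equal; transitivity (sg * sg * (u h - p) ^ 2); [rewrite Hsg | ]; ring. }
  eapply filterlim_ext_loc; [| exact (lim_mult _ _ sg _ (filterlim_const sg) Hv)].
  apply (filter_imp (fun h => 0 < h)); [| exact at_right_pos].
  intros h Hh. assert (0 < sqrt h) by now apply sqrt_lt_R0.
  transitivity (sg * sg * (u h - p) / sqrt h); [field | rewrite Hsg; field]; lra.
Qed.

Lemma area_limits_ordered (a1 a2 : R -> R) :
  at_right 0 (fun h => p - r < a1 h < p /\ p < a2 h < p + r /\
                       height (a1 h) = h /\ height (a2 h) = h) ->
  filterlim (fun h => T_area x y p (a1 h) (a2 h) / (h * sqrt h)) (at_right 0)
    (locally (sqrt 2 / sqrt kappa)) /\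
  filterlim (fun h => U_area x y p (a1 h) (a2 h) / (h * sqrt h)) (at_right 0)
    (locally (sqrt 2 / (2 * sqrt kappa))) /\
  at_right 0 (fun h => det2 (Xd x y (a1 h)) (Xd x y (a2 h)) <> 0).
Proof.
  intros Hev. assert (Hk : 0 < kappa) by exact curvature_pos.
  set (W := sqrt (/ (kappa / 2))).
  assert (HW : W = sqrt 2 / sqrt kappa)
    by (unfold W; rewrite <- sqrt_div_alt by exact Hk; f_equal; field; lra).
  assert (W_pos : 0 < W) by (apply sqrt_lt_R0, Rinv_0_lt_compat; lra).
  assert (kWW : kappa * (W * W) = 2)
    by (unfold W; rewrite sqrt_sqrt by (apply Rlt_le, Rinv_0_lt_compat; lra); field; lra).
  assert (La1 : filterlim a1 (at_right 0) (locally p)).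
  { apply level_param_lim; generalize Hev; apply filter_imp; intros h H; split; [apply Rabs_def1 |]; lra. }
  assert (La2 : filterlim a2 (at_right 0) (locally p)).
  { apply level_param_lim; generalize Hev; apply filter_imp; intros h H; split; [apply Rabs_def1 |]; lra. }
  assert (Ne1 : at_right 0 (fun h => a1 h <> p)) by (generalize Hev; apply filter_imp; intros; lra).
  assert (Ne2 : at_right 0 (fun h => a2 h <> p)) by (generalize Hev; apply filter_imp; intros; lra).
  assert (Lw1 : filterlim (fun h => (a1 h - p) / sqrt h) (at_right 0) (locally (-1 * W))).
  { apply level_param_scaled_lim; [ring |].
    generalize Hev; apply filter_imp; intros h H; repeat split; try apply Rabs_def1; lra. }
  assert (Lw2 : filterlim (fun h => (a2 h - p) / sqrt h) (at_right 0) (locally (1 * W))).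
  { apply level_param_scaled_lim; [ring |].
    generalize Hev; apply filter_imp; intros h H; repeat split; try apply Rabs_def1; lra. }
  pose proof (lim_derive_div_sqrt _ _ _ _ _ is_derive_abscissa abscissa_p La1 Ne1 Lw1) as LG1.
  pose proof (lim_derive_div_sqrt _ _ _ _ _ is_derive_abscissa abscissa_p La2 Ne2 Lw2) as LG2.
  pose proof (lim_derive_div_sqrt _ _ _ _ _ is_derive_height' height'_p La1 Ne1 Lw1) as LB1.
  pose proof (lim_derive_div_sqrt _ _ _ _ _ is_derive_height' height'_p La2 Ne2 Lw2) as LB2.
  pose proof (filterlim_comp _ _ _ _ _ _ _ _ La1 abscissa'_continuous) as LA1.
  pose proof (filterlim_comp _ _ _ _ _ _ _ _ La2 abscissa'_continuous) as LA2.
  replace (1 * (-1 * W)) with (- W) in LG1 by ring.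
  replace (1 * (1 * W)) with W in LG2 by ring.
  replace (kappa * (-1 * W)) with (- (kappa * W)) in LB1 by ring.
  replace (kappa * (1 * W)) with (kappa * W) in LB2 by ring.
  assert (Hlevel : at_right 0 (fun h => height (a1 h) = h /\ height (a2 h) = h))
    by (generalize Hev; apply filter_imp; tauto).
  split; [| split].
  - rewrite <- HW. eapply filterlim_ext_loc; [| exact (chord_area_lim _ _ W W_pos LG1 LG2)].
    generalize Hlevel; apply filter_imp; intros h [E1 E2].
    now rewrite T_area_frame, E1, E2.
  - replace (sqrt 2 / (2 * sqrt kappa)) with (W / 2)
      by (rewrite HW; assert (0 < sqrt kappa) by (now apply sqrt_lt_R0); field; lra).
    eapply filterlim_ext_loc;
      [| exact (tangent_triangle_area_lim _ _ _ _ _ _ W kappa W_pos kWW LG1 LG2 LA1 LA2 LB1 LB2)].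
    generalize Hlevel; apply filter_imp; intros h [E1 E2].
    now rewrite U_area_frame, E1, E2.
  - generalize (filter_and _ _ at_right_pos
      (scaled_tangents_nondegenerate _ _ _ _ W kappa W_pos kWW LA1 LA2 LB1 LB2)).
    apply filter_imp; intros h (Hh & _ & _ & HD). apply det2_Xd_neq0.
    assert (Hs : 0 < sqrt h) by now apply sqrt_lt_R0.
    intros E; apply HD; simpl.
    replace (abscissa' (a1 h) * (height' (a2 h) / sqrt h) - height' (a1 h) / sqrt h * abscissa' (a2 h))
      with ((abscissa' (a1 h) * height' (a2 h) - height' (a1 h) * abscissa' (a2 h)) / sqrt h)
      by (field; lra).
    rewrite E; unfold Rdiv; ring.
Qed.

Lemma area_limits (s1 s2 : R -> R) :
  at_right 0 (fun h => in_I a b (s1 h) /\ in_I a b (s2 h) /\ s1 h <> s2 h /\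
                       height (s1 h) = h /\ height (s2 h) = h) ->
  filterlim (fun h => T_area x y p (s1 h) (s2 h) / (h * sqrt h)) (at_right 0)
    (locally (sqrt 2 / sqrt kappa)) /\
  filterlim (fun h => U_area x y p (s1 h) (s2 h) / (h * sqrt h)) (at_right 0)
    (locally (sqrt 2 / (2 * sqrt kappa))).
Proof.
  intros Hev. destruct level_points as [del [Hdel Hlevel]].
  set (a1 h := Rmin (s1 h) (s2 h)); set (a2 h := Rmax (s1 h) (s2 h)).
  assert (Hord : at_right 0 (fun h => p - r < a1 h < p /\ p < a2 h < p + r /\
                                      height (a1 h) = h /\ height (a2 h) = h)).
  { generalize (filter_and _ _ at_right_pos (filter_and _ _ (at_right_lt del Hdel) Hev)).
    apply filter_imp; intros h (Hh & Hh' & I1 & I2 & Hne & F1 & F2).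
    destruct (Hlevel h (conj Hh Hh')) as (z1 & z2 & Z1 & Z2 & _ & _ & Huniq).
    unfold a1, a2, Rmin, Rmax.
    destruct (Huniq _ I1 F1) as [E1 | E1], (Huniq _ I2 F2) as [E2 | E2];
      rewrite E1, E2 in *; try congruence; destruct (Rle_dec _ _); repeat split; auto; lra. }
  destruct (area_limits_ordered a1 a2 Hord) as (LT & LU & LD).
  assert (Hswap : at_right 0 (fun h =>
    T_area x y p (a1 h) (a2 h) = T_area x y p (s1 h) (s2 h) /\
    U_area x y p (a1 h) (a2 h) = U_area x y p (s1 h) (s2 h))).
  { generalize LD; apply filter_imp; intros h D. unfold a1, a2, Rmin, Rmax in *.
    destruct (Rle_dec (s1 h) (s2 h)); [easy |].
    split; [apply tri_area_swap | now apply U_area_swap]. }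
  split; eapply filterlim_ext_loc; [| exact LT | | exact LU];
    generalize Hswap; apply filter_imp; intros h [E1 E2]; now rewrite ?E1, ?E2.
Qed.

End Level.

End Curve.

Theorem theorem1 (a b : Rbar) (x y : R -> R) (p : R) (N : pt) :
  strictly_convex a b x y ->
  in_I a b p ->
  convex_side_normal a b x y p N ->
  (* for sufficiently small h > 0, the line m meets X in exactly two points *)
  (exists delta : R, 0 < delta /\
     forall h, 0 < h < delta ->
       exists s1 s2, in_I a b s1 /\ in_I a b s2 /\ s1 < s2 /\
         on_m x y p N h s1 /\ on_m x y p N h s2 /\
         (forall s, in_I a b s -> on_m x y p N h s -> s = s1 \/ s = s2)) /\
  (* for any choice of these two points, the limits hold *)
  (forall s1 s2 : R -> R,
     at_right 0 (fun h => in_I a b (s1 h) /\ in_I a b (s2 h) /\ s1 h <> s2 h /\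
                          on_m x y p N h (s1 h) /\ on_m x y p N h (s2 h)) ->
     filterlim (fun h => T_area x y p (s1 h) (s2 h) / (h * sqrt h)) (at_right 0)
       (locally (sqrt 2 / sqrt (dot (Xdd x y p) N))) /\
     filterlim (fun h => U_area x y p (s1 h) (s2 h) / (h * sqrt h)) (at_right 0)
       (locally (sqrt 2 / (2 * sqrt (dot (Xdd x y p) N))))).
Proof.
  intros (_ & Hreg & [Cx _] & [Cy _] & Hsimp & Hconv & Hcurv) Hp HN.
  assert (Hdx : forall s, in_I a b s -> ex_derive x s) by (intros s; exact (Cx 1%nat s ltac:(auto))).
  assert (Hdy : forall s, in_I a b s -> ex_derive y s) by (intros s; exact (Cy 1%nat s ltac:(auto))).
  assert (Hdx2 : ex_derive (Derive x) p) by exact (Cx 2%nat p ltac:(auto) Hp).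
  assert (Hdy2 : ex_derive (Derive y) p) by exact (Cy 2%nat p ltac:(auto) Hp).
  specialize (Hcurv p N Hp HN).
  destruct (height_lower_bound a b x y p N Hdx Hdy Hdx2 Hdy2 Hp HN Hcurv) as [r [Hr Hbound]].
  split.
  - destruct (level_points a b x y p N Hdx Hdy Hreg Hsimp Hconv Hp HN Hcurv r Hr Hbound)
      as [del [Hdel Hlevel]].
    exists del; split; [exact Hdel | intros h Hh].
    destruct (Hlevel h Hh) as (s1 & s2 & H1 & H2 & F1 & F2 & Huniq).
    exists s1, s2; repeat split; try apply Hbound, Rabs_def1; try lra; assumption.
  - exact (area_limits a b x y p N Hdx Hdy Hdx2 Hdy2 Hreg Hsimp Hconv Hp HN Hcurv r Hr Hbound).
Qed.
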